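(* Let $(N,+,* )$ be a planar nearring with $D(N)\ne\{0\}$. Then the set $K$ of zero multipliers of $N$ is an ideal of $N$.
   Context: A (right) nearring $(N,+,* )$ is a set with a group $(N,+)$, a semigroup $(N,* )$, and right distributivity $(a+b)*c=a*c+b*c$. $N$ is planar if the relation $a\cong b$ ($x*a=x*b$ for all $x$) has at least $3$ classes and for all $a,b,c$ with $a\not\cong b$ the equation $x*a=x*b+c$ has a unique solution. The zero multipliers are the $n\in N$ with $x*n=0$ for all $x\in N$. $D(N)=\{n: n*(a+b)=n*a+n*b\ \forall a,b\}$. A subset $I$ is an ideal if it is a normal subgroup of $(N,+)$ with $i*n\in I$ for all $i\in I,n\in N$ (right ideal), and $n*m-n*(m+i)\in I$ for all $n,m\in N$, $i\in I$ (left ideal). *)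

Record is_nearring {N : Type} (add : N -> N -> N) (opp : N -> N) (zero : N)
    (mul : N -> N -> N) : Prop := {
  nr_addA : forall a b c, add a (add b c) = add (add a b) c;
  nr_add0l : forall a, add zero a = a;
  nr_add0r : forall a, add a zero = a;
  nr_addNl : forall a, add (opp a) a = zero;
  nr_addNr : forall a, add a (opp a) = zero;
  nr_mulA : forall a b c, mul a (mul b c) = mul (mul a b) c;
  nr_mulDr : forall a b c, mul (add a b) c = add (mul a c) (mul b c)
}.

Definition nr_equiv {N : Type} (mul : N -> N -> N) (a b : N) : Prop :=
  forall x, mul x a = mul x b.

Definition is_planar {N : Type} (add : N -> N -> N) (mul : N -> N -> N) : Prop :=
  (exists a b c : N, ~ nr_equiv mul a b /\ ~ nr_equiv mul a c /\ ~ nr_equiv mul b c) /\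
  (forall a b c : N, ~ nr_equiv mul a b ->
     exists! x : N, mul x a = add (mul x b) c).

Definition zero_multiplier {N : Type} (zero : N) (mul : N -> N -> N) (n : N) : Prop :=
  forall x, mul x n = zero.

Definition distributive_elt {N : Type} (add : N -> N -> N) (mul : N -> N -> N) (n : N) : Prop :=
  forall a b, mul n (add a b) = add (mul n a) (mul n b).

Definition is_nr_ideal {N : Type} (add : N -> N -> N) (opp : N -> N) (zero : N)
    (mul : N -> N -> N) (I : N -> Prop) : Prop :=
  I zero /\
  (forall i j, I i -> I j -> I (add i j)) /\
  (forall i, I i -> I (opp i)) /\
  (forall n i, I i -> I (add (add n i) (opp n))) /\
  (forall i n, I i -> I (mul i n)) /\
  (* left ideal *)
  (forall n m i, I i -> I (add (mul n m) (opp (mul n (add m i))))).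

From Stdlib Require Import Classical.

(* In a planar nearring, if [y * p = y * q] for some [y <> 0] then [p] and [q]
   are equivalent: otherwise both [y] and [0] solve [x * p = x * q + 0].
   A nonzero distributive [d] thus detects zero multipliers ([d * k = 0] forces
   [k] to be one), and [d] maps every expression occurring in the ideal
   conditions to [0]. *)

#[local] Arguments nr_addA {N add opp zero mul}.
#[local] Arguments nr_add0l {N add opp zero mul}.
#[local] Arguments nr_add0r {N add opp zero mul}.
#[local] Arguments nr_addNl {N add opp zero mul}.
#[local] Arguments nr_addNr {N add opp zero mul}.
#[local] Arguments nr_mulA {N add opp zero mul}.
#[local] Arguments nr_mulDr {N add opp zero mul}.

Section Nearring.

Context {N : Type} {add : N -> N -> N} {opp : N -> N} {zero : N}
  {mul : N -> N -> N}.
Hypothesis HN : is_nearring add opp zero mul.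

Lemma nr_idem_eq0 (u : N) : u = add u u -> u = zero.
Proof.
  intros Hu. transitivity (add (opp u) (add u u)).
  - rewrite (nr_addA HN), (nr_addNl HN), (nr_add0l HN). reflexivity.
  - rewrite <- Hu. apply (nr_addNl HN).
Qed.

Lemma nr_opp_unique (u v : N) : add u v = zero -> v = opp u.
Proof.
  intros Huv.
  rewrite <- (nr_add0l HN v), <- (nr_addNl HN u), <- (nr_addA HN), Huv,
    (nr_add0r HN).
  reflexivity.
Qed.

Lemma nr_mul0l (x : N) : mul zero x = zero.
Proof.
  apply nr_idem_eq0. rewrite <- (nr_mulDr HN), (nr_add0l HN). reflexivity.
Qed.

Lemma distributive_elt_opp {d : N} :
  distributive_elt add mul d -> mul d zero = zero ->
  forall u, mul d (opp u) = opp (mul d u).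
Proof.
  intros Hd Hd0 u. apply nr_opp_unique.
  rewrite <- Hd, (nr_addNr HN). exact Hd0.
Qed.

Lemma zero_multiplier_mulr (i n : N) :
  zero_multiplier zero mul i -> zero_multiplier zero mul (mul i n).
Proof.
  intros Hi x. rewrite (nr_mulA HN), Hi. apply nr_mul0l.
Qed.

Section Planar.

Hypothesis Hplanar : is_planar add mul.

Lemma planar_solution_unique (p q c y z : N) :
  ~ nr_equiv mul p q ->
  mul y p = add (mul y q) c -> mul z p = add (mul z q) c -> y = z.
Proof.
  intros Hpq Hy Hz. destruct (proj2 Hplanar p q c Hpq) as [w [_ Hw]].
  rewrite <- (Hw y Hy). exact (Hw z Hz).
Qed.

Lemma planar_equiv_of_mul_eq (y p q : N) :
  y <> zero -> mul y p = mul y q -> nr_equiv mul p q.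
Proof.
  intros Hy Hyp. apply NNPP. intros Hpq. apply Hy.
  apply (planar_solution_unique p q zero y zero Hpq).
  - rewrite (nr_add0r HN). exact Hyp.
  - rewrite !nr_mul0l, (nr_add0r HN). reflexivity.
Qed.

Lemma planar_exists_not_equiv0 : exists e, ~ nr_equiv mul e zero.
Proof.
  destruct (proj1 Hplanar) as [a [b [_ [Hab _]]]].
  destruct (classic (nr_equiv mul a zero)) as [Ha | Ha]; [| eauto].
  exists b. intros Hb. apply Hab. intros x. rewrite Ha, Hb. reflexivity.
Qed.

(* [x * 0] and [0] both solve [y * e = y * 0 + 0]. *)
Lemma planar_mul0r (x : N) : mul x zero = zero.
Proof.
  destruct planar_exists_not_equiv0 as [e He].
  apply (planar_solution_unique e zero zero _ _ He).
  - rewrite <- !(nr_mulA HN), !nr_mul0l, (nr_add0r HN). reflexivity.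
  - rewrite !nr_mul0l, (nr_add0r HN). reflexivity.
Qed.

Lemma zero_multiplierP (k : N) :
  zero_multiplier zero mul k <-> nr_equiv mul k zero.
Proof.
  split; intros Hk x; rewrite Hk; [symmetry |]; apply planar_mul0r.
Qed.

Context {d : N}.
Hypotheses (Hd : distributive_elt add mul d) (Hd0 : d <> zero).

Lemma zero_multiplier_of_distributive (k : N) :
  mul d k = zero -> zero_multiplier zero mul k.
Proof.
  intros Hk. apply zero_multiplierP, (planar_equiv_of_mul_eq d); [exact Hd0 |].
  rewrite Hk, planar_mul0r. reflexivity.
Qed.

Lemma zero_multiplier_add (i j : N) :
  zero_multiplier zero mul i -> zero_multiplier zero mul j ->
  zero_multiplier zero mul (add i j).
Proof.
  intros Hi Hj. apply zero_multiplier_of_distributive.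
  rewrite Hd, Hi, Hj, (nr_add0r HN). reflexivity.
Qed.

Lemma zero_multiplier_opp (i : N) :
  zero_multiplier zero mul i -> zero_multiplier zero mul (opp i).
Proof.
  intros Hi. apply zero_multiplier_of_distributive.
  rewrite (distributive_elt_opp Hd (planar_mul0r d) _), Hi.
  symmetry. apply nr_opp_unique, (nr_add0r HN).
Qed.

Lemma zero_multiplier_conj (n i : N) :
  zero_multiplier zero mul i -> zero_multiplier zero mul (add (add n i) (opp n)).
Proof.
  intros Hi. apply zero_multiplier_of_distributive.
  rewrite !Hd, (distributive_elt_opp Hd (planar_mul0r d) _), Hi,
    (nr_add0r HN), (nr_addNr HN).
  reflexivity.
Qed.

Lemma zero_multiplier_left_ideal (n m i : N) :
  zero_multiplier zero mul i ->
  zero_multiplier zero mul (add (mul n m) (opp (mul n (add m i)))).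
Proof.
  intros Hi.
  assert (Hmi : nr_equiv mul (add m i) m).
  { apply (planar_equiv_of_mul_eq d); [exact Hd0 |].
    rewrite Hd, Hi, (nr_add0r HN). reflexivity. }
  rewrite (Hmi n), (nr_addNr HN). intros x. apply planar_mul0r.
Qed.

End Planar.

End Nearring.

Theorem mainTheorem5 (N : Type) (add : N -> N -> N) (opp : N -> N) (zero : N)
    (mul : N -> N -> N)
    (HN : is_nearring add opp zero mul)
    (Hplanar : is_planar add mul)
    (HD : exists d : N, distributive_elt add mul d /\ d <> zero) :
  is_nr_ideal add opp zero mul (zero_multiplier zero mul).
Proof.
  destruct HD as [d [Hd Hd0]].
  repeat split.
  - exact (planar_mul0r HN Hplanar).
  - exact (zero_multiplier_add HN Hplanar Hd Hd0).
  - exact (zero_multiplier_opp HN Hplanar Hd Hd0).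
  - exact (zero_multiplier_conj HN Hplanar Hd Hd0).
  - exact (zero_multiplier_mulr HN).
  - exact (zero_multiplier_left_ideal HN Hplanar Hd Hd0).
Qed.
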